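(* Let $0<p<1$ and let $G$ be a connected simple graph with $n$ vertices and $m$ edges. Then $$\min\left\{\mathcal{E}_p^+(G), \mathcal{E}_p^-(G)\right\} \geq (n-1)^{p/2}.$$
   Context: For a graph $G$ with adjacency eigenvalues $\lambda_1\ge\cdots\ge\lambda_n$ (with multiplicity), $\mathcal{E}_p^+(G) = \sum_{\lambda_i>0}\lambda_i^p$ and $\mathcal{E}_p^-(G) = \sum_{\lambda_i<0}|\lambda_i|^p$. *)

From HB Require Import structures.
From mathcomp Require Import all_boot all_order all_algebra.
From mathcomp Require Import reals exp.
Set Implicit Arguments. Unset Strict Implicit. Unset Printing Implicit Defensive.
Import Order.TTheory GRing.Theory Num.Theory.
Local Open Scope ring_scope.

(* A simple graph on the vertex set 'I_n is a relation e : rel 'I_n that is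
   symmetric and irreflexive. Its adjacency matrix: *)
Definition adjmx (R : realType) (n : nat) (e : rel 'I_n) : 'M[R]_n :=
  \matrix_(i, j) (e i j)%:R.

Definition connected_graph (n : nat) (e : rel 'I_n) : Prop :=
  forall x y : 'I_n, connect e x y.

(* Given the list s of eigenvalues (with multiplicity):
   E_p^+ = sum of lambda^p over positive lambda,
   E_p^- = sum of |lambda|^p over negative lambda. *)
Definition Epos (R : realType) (s : seq R) (p : R) : R :=
  \sum_(x <- s | 0 < x) x `^ p.
Definition Eneg (R : realType) (s : seq R) (p : R) : R :=
  \sum_(x <- s | x < 0) `|x| `^ p.

From HB Require Import structures.
From mathcomp Require Import all_boot all_order all_algebra.
From mathcomp Require Import reals exp.
From mathcomp Require Import ring.
Set Implicit Arguments. Unset Strict Implicit. Unset Printing Implicit Defensive.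
Import Order.TTheory GRing.Theory Num.Theory.
Local Open Scope ring_scope.

(** The eigenvalues of the adjacency matrix sum to its trace, 0, and their
    squares sum to the trace of its square, the number 2m >= 2(n-1) of ordered
    adjacent pairs. Hence the positive eigenvalues and the absolute values of
    the negative ones have a common sum S, with 2(n-1) <= sum of squares <= 2 S^2.
    As t |-> t^p is subadditive for p <= 1, both E_p^+ and E_p^- are at least
    S^p >= (n-1)^(p/2). *)

Section ConnectedArcs.
Variables (T : finType) (e : rel T).

Definition arcs : {set T * T} := [set xy | e xy.1 xy.2].

Lemma card_arcs_descent (f : T -> nat) (r : T) : symmetric e ->
  (forall x, x != r -> exists y, e x y && (f y < f x)%N) ->
  (2 * #|T|.-1 <= #|arcs|)%N.
Proof.
move=> e_sym descent.
pose up x := odflt x [pick y | e x y && (f y < f x)%N].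
have upP x : x != r -> e x (up x) && (f (up x) < f x)%N.
  rewrite /up => x_neq_r; case: pickP => //= no_up.
  by have [y] := descent x x_neq_r; rewrite no_up.
(* The arcs (x, up x) and (up x, x) for x != r are pairwise distinct, as f
   decreases strictly along up. *)
pose edges_up := [set (x, up x) | x in [set~ r]].
pose edges_down := [set (up x, x) | x in [set~ r]].
have card_up : #|edges_up| = #|T|.-1.
  by rewrite card_in_imset ?cardsC1 // => x y _ _ [].
have card_down : #|edges_down| = #|T|.-1.
  by rewrite card_in_imset ?cardsC1 // => x y _ _ [].
have up_down0 : edges_up :&: edges_down = set0.
  apply/setP => -[a b]; rewrite !inE; apply/negP.
  case/andP => /imsetP [x + [-> ->]] /imsetP [y + [xE yE]]; rewrite !inE.
  move=> /upP/andP[_ lt_x] /upP/andP[_]; rewrite -xE -yE.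
  by move=> /(ltn_trans lt_x); rewrite ltnn.
have up_down_arcs : edges_up :|: edges_down \subset arcs.
  apply/subsetP => -[a b]; rewrite !inE.
  by case/orP => /imsetP [x + [-> ->]]; rewrite !inE => /upP/andP[] //; rewrite e_sym.
have := subset_leq_card up_down_arcs.
by rewrite cardsU up_down0 cards0 card_up card_down subn0 mul2n -addnn.
Qed.

Lemma connect_descent (r : T) : (forall x, connect e x r) ->
  exists f : T -> nat, forall x, x != r -> exists y, e x y && (f y < f x)%N.
Proof.
move=> to_r.
pose reach x k := [exists t : k.-tuple T, path e x t && (last x t == r)].
have reach_ex x : exists k, reach x k.
  have /connectP [t t_path t_last] := to_r x.
  by exists (size t); apply/existsP; exists (in_tuple t); rewrite t_path -t_last eqxx.
(* f x is the length of a shortest path from x to r. *)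
exists (fun x => ex_minn (reach_ex x)) => x x_neq_r.
case: ex_minnP => k /existsP [[[|y t] /= /eqP size_t]]; first by rewrite (negPf x_neq_r).
case/andP => /andP [exy y_path] y_last k_min; exists y; rewrite exy /=.
case: ex_minnP => k' _ k'_min; rewrite -size_t ltnS k'_min //.
by apply/existsP; exists (in_tuple t); rewrite y_path.
Qed.

Lemma card_arcs_connected : symmetric e -> (forall x y, connect e x y) ->
  (2 * #|T|.-1 <= #|arcs|)%N.
Proof.
move=> e_sym e_conn; case: (posnP #|T|) => [-> // | /card_gt0P [r _]].
have [f descent] := connect_descent (e_conn^~ r).
exact: card_arcs_descent e_sym descent.
Qed.

End ConnectedArcs.

Lemma mxtrace_adjmx (R : realType) n (e : rel 'I_n) : irreflexive e ->
  \tr (adjmx R e) = 0.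
Proof. by move=> e_irr; apply: big1 => i _; rewrite mxE e_irr. Qed.

Lemma mxtrace_adjmx_sqr (R : realType) n (e : rel 'I_n) : symmetric e ->
  \tr (adjmx R e *m adjmx R e) = #|arcs e|%:R.
Proof.
move=> e_sym; rewrite /mxtrace; under eq_bigr do rewrite mxE.
rewrite pair_bigA -sum1_card natr_sum [RHS]big_mkcond /=; apply: eq_bigr => -[i j] _.
by rewrite !mxE inE /= (e_sym j i); case: (e i j); rewrite ?mulr1 ?mulr0.
Qed.

Lemma prodrN_seq (R : comNzRingType) (I : Type) (s : seq I) (F : I -> R) :
  \prod_(i <- s) - F i = (-1) ^+ size s * \prod_(i <- s) F i.
Proof.
elim: s => [|i s IHs]; first by rewrite !big_nil mul1r.
by rewrite !big_cons IHs exprS; ring.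
Qed.

Lemma char_poly_opp (R : comNzRingType) n (A : 'M[R]_n) :
  char_poly (- A) = (-1) ^+ n * (char_poly A \Po - 'X).
Proof.
have oppX : map_mx (comp_poly (- 'X)) (char_poly_mx A) = - char_poly_mx (- A).
  apply/matrixP => i j; rewrite !mxE comp_polyB comp_polyC raddfMn /= comp_polyX.
  by rewrite polyCN mulNrn opprK opprD.
rewrite /char_poly -det_map_mx oppX -[- char_poly_mx _]scaleN1r detZ.
by rewrite mulrA -exprMn mulrNN mulr1 expr1n mul1r.
Qed.

Lemma char_poly_mulmx_self_comp (R : comNzRingType) n (A : 'M[R]_n) :
  char_poly (A *m A) \Po 'X^2 = char_poly A * char_poly (- A).
Proof.
set B := map_mx polyC A.
have sqrX : map_mx (comp_poly 'X^2) (char_poly_mx (A *m A))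
            = ('X%:M - B) *m ('X%:M + B).
  rewrite mulmxDr !mulmxBl (scalar_mxC _ B) addrA subrK -scalar_mxM -map_mxM.
  by apply/matrixP => i j; rewrite !mxE comp_polyB comp_polyC raddfMn /= comp_polyX.
by rewrite /char_poly -det_map_mx sqrX det_mulmx /char_poly_mx map_mxN opprK.
Qed.

Section Eigenvalues.
Variables (R : idomainType) (n : nat) (A : 'M[R]_n) (s : seq R).
Hypothesis charA : char_poly A = \prod_(x <- s) ('X - x%:P).

Lemma size_eigen : size s = n.
Proof. by have := size_char_poly A; rewrite charA size_prod_XsubC => -[]. Qed.

Lemma mxtrace_eigen : \tr A = \sum_(x <- s) x.
Proof.
have [n0|n_gt0] := posnP n.
  rewrite [s]size0nil ?size_eigen // big_nil.
  by apply: big1 => i _; suff : (i < 0)%N by []; rewrite -n0.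
apply: oppr_inj; rewrite -char_poly_trace // charA -coefPn_prod_XsubC size_eigen //.
by rewrite -lt0n.
Qed.

Lemma char_poly_opp_eigen : char_poly (- A) = \prod_(x <- s) ('X - (- x)%:P).
Proof.
rewrite char_poly_opp charA rmorph_prod /= -size_eigen -prodrN_seq.
by apply: eq_bigr => x _; rewrite comp_polyB comp_polyX comp_polyC polyCN; ring.
Qed.

Lemma char_poly_mulmx_self_eigen :
  char_poly (A *m A) = \prod_(y <- [seq x ^+ 2 | x <- s]) ('X - y%:P).
Proof.
rewrite big_map.
have size_X2 : (1 < size ('X^2 : {poly R}))%N by rewrite size_polyXn.
apply/eqP; rewrite -subr_eq0 -(comp_poly_eq0 _ size_X2) comp_polyB subr_eq0.
rewrite char_poly_mulmx_self_comp char_poly_opp_eigen charA -big_split rmorph_prod /=.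
apply/eqP/eq_bigr => x _; rewrite comp_polyB comp_polyC comp_polyX polyCN opprK.
by rewrite rmorphXn /=; ring.
Qed.

End Eigenvalues.

Lemma mxtrace_mulmx_self_eigen (R : idomainType) n (A : 'M[R]_n) (s : seq R) :
  char_poly A = \prod_(x <- s) ('X - x%:P) ->
  \tr (A *m A) = \sum_(x <- s) x ^+ 2.
Proof.
by move=> charA; rewrite (mxtrace_eigen (char_poly_mulmx_self_eigen charA)) big_map.
Qed.

Lemma powRD_le (R : realType) (p a b : R) : p <= 1 -> 0 <= a -> 0 <= b ->
  (a + b) `^ p <= a `^ p + b `^ p.
Proof.
move=> p_le1 a_ge0 b_ge0.
have [->|a_neq0] := eqVneq a 0; first by rewrite add0r lerDr powR_ge0.
have [->|b_neq0] := eqVneq b 0; first by rewrite addr0 lerDl powR_ge0.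
have a_gt0 : 0 < a by rewrite lt_def a_neq0.
have b_gt0 : 0 < b by rewrite lt_def b_neq0.
set c := a + b; have c_gt0 : 0 < c by rewrite addr_gt0.
have share u : 0 < u -> u <= c -> u / c * c `^ p <= u `^ p.
  move=> u_gt0 u_le_c; rewrite -{2}[u](mulfVK (lt0r_neq0 c_gt0)).
  rewrite powRM ?divr_ge0 ?(ltW u_gt0) ?(ltW c_gt0) //.
  by rewrite ler_wpM2r ?powR_ge0 // ger1_powR // divr_gt0 //= ler_pdivrMr // mul1r.
rewrite -[c `^ p]mul1r -(divff (lt0r_neq0 c_gt0)) {1}/c mulrDl mulrDl.
by rewrite lerD // share // ?lerDl ?lerDr ltW.
Qed.

Lemma powR_sum_le (R : realType) (I : Type) (r : seq I) (P : pred I) (F : I -> R)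
    (p : R) : 0 < p -> p <= 1 -> (forall i, P i -> 0 <= F i) ->
  (\sum_(i <- r | P i) F i) `^ p <= \sum_(i <- r | P i) F i `^ p.
Proof.
move=> p_gt0 p_le1 F_ge0; elim: r => [|i r IHr].
  by rewrite !big_nil powR0 ?lt0r_neq0.
rewrite !big_cons; case: ifP => // Pi.
apply: le_trans (powRD_le _ _ _) (lerD (lexx _) IHr) => //; first exact: F_ge0.
exact: sumr_ge0.
Qed.

Lemma sum_sqr_le_sqr_sum (R : realDomainType) (I : Type) (r : seq I) (P : pred I)
    (F : I -> R) : (forall i, P i -> 0 <= F i) ->
  \sum_(i <- r | P i) F i ^+ 2 <= (\sum_(i <- r | P i) F i) ^+ 2.
Proof.
move=> F_ge0; elim: r => [|i r IHr]; first by rewrite !big_nil expr0n.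
rewrite !big_cons; case: ifP => // Pi.
have Fi_ge0 := F_ge0 i Pi.
have sum_ge0 : 0 <= \sum_(j <- r | P j) F j by exact: sumr_ge0.
by rewrite sqrrD -addrA lerD2l (le_trans IHr) // lerDr mulrn_wge0 // mulr_ge0.
Qed.

Lemma sumr_split_sign (R : realDomainType) (s : seq R) (F : R -> R) : F 0 = 0 ->
  \sum_(x <- s) F x = \sum_(x <- s | 0 < x) F x + \sum_(x <- s | x < 0) F x.
Proof.
move=> F0; elim: s => [|x s IHs]; first by rewrite !big_nil addr0.
rewrite !big_cons IHs; case: (ltrgt0P x) => [x_gt0|x_lt0|->].
- by rewrite addrA.
- by rewrite addrCA.
- by rewrite F0 add0r.
Qed.

Lemma powR_half_le (R : realType) (p N S : R) : 0 <= p -> 0 <= N -> 0 <= S ->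
  N <= S ^+ 2 -> N `^ (p / 2) <= S `^ p.
Proof.
move=> p_ge0 N_ge0 S_ge0 N_le.
apply: le_trans (ge0_ler_powR _ _ _ N_le) _; rewrite ?nnegrE ?sqr_ge0 ?divr_ge0 //.
by rewrite -powR_mulrn // -powRrM mulrC divfK ?pnatr_eq0.
Qed.

Lemma Epos_ge (R : realType) (s : seq R) (p N : R) : 0 < p -> p <= 1 -> 0 <= N ->
  \sum_(x <- s) x = 0 -> N *+ 2 <= \sum_(x <- s) x ^+ 2 -> N `^ (p / 2) <= Epos s p.
Proof.
move=> p_gt0 p_le1 N_ge0 sum0 sum_sqr_ge.
set S := \sum_(x <- s | 0 < x) x.
have S_ge0 : 0 <= S by apply: sumr_ge0 => x /ltW.
have sum_neg : \sum_(x <- s | x < 0) `|x| = S.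
  have sum_lt0 : \sum_(x <- s | x < 0) x = - S.
    by apply/eqP; rewrite -addr_eq0 addrC -(sumr_split_sign s (F := id)) ?sum0.
  by rewrite -[S]opprK -sum_lt0 -sumrN; apply: eq_bigr => x /ltr0_norm.
have sum_sqr_le : \sum_(x <- s) x ^+ 2 <= S ^+ 2 *+ 2.
  rewrite (sumr_split_sign s (F := fun x => x ^+ 2)) ?expr0n // mulr2n lerD //.
    by apply: sum_sqr_le_sqr_sum => x /ltW.
  rewrite -sum_neg; under eq_bigr do rewrite -(real_normK (num_real _)).
  exact: sum_sqr_le_sqr_sum.
have N_le : N <= S ^+ 2 by rewrite -(ler_pMn2r (ltn0Sn 1)) (le_trans sum_sqr_ge).
apply: le_trans (powR_half_le (ltW p_gt0) N_ge0 S_ge0 N_le) _.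
by apply: powR_sum_le => // x /ltW.
Qed.

Lemma Eneg_Epos_opp (R : realType) (s : seq R) (p : R) :
  Eneg s p = Epos [seq - x | x <- s] p.
Proof.
rewrite /Epos big_map; apply: eq_big => [x|x x_lt0]; first by rewrite oppr_gt0.
by rewrite ltr0_norm.
Qed.

Theorem theorem5p7 (R : realType) (n : nat) (e : rel 'I_n) (p : R) :
  0 < p -> p < 1 ->
  symmetric e -> irreflexive e -> connected_graph e ->
  forall s : seq R,
    char_poly (adjmx R e) = \prod_(x <- s) ('X - x%:P) ->
    ((n - 1)%N%:R) `^ (p / 2) <= Num.min (Epos s p) (Eneg s p).
Proof.
move=> p_gt0 p_lt1 e_sym e_irr e_conn s charA.
have sum0 : \sum_(x <- s) x = 0 by rewrite -(mxtrace_eigen charA) mxtrace_adjmx.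
have sum_sqr : (n - 1)%:R *+ 2 <= \sum_(x <- s) x ^+ 2.
  rewrite -(mxtrace_mulmx_self_eigen charA) mxtrace_adjmx_sqr // -mulrnA ler_nat.
  by have := card_arcs_connected e_sym e_conn; rewrite card_ord subn1 mulnC.
have p_le1 := ltW p_lt1.
rewrite le_min Epos_ge //= Eneg_Epos_opp Epos_ge // big_map.
  by rewrite sumrN sum0 oppr0.
by under eq_bigr do rewrite sqrrN.
Qed.
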